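(* For every $\sigma\in\mathcal{SC}$, $\sigma\sim\mathrm{mcl}(\sigma)$.
   Context: Contract terms over base types $BT$ and labels $\mathcal L$: $\sigma::=\mathbf 1\mid ?\mathtt t.\sigma\mid !\mathtt t.\sigma\mid !(\sigma).\sigma\mid ?(\sigma).\sigma\mid \sum_{i\in I}?l_i.\sigma_i\mid \bigoplus_{i\in I}!l_i.\sigma_i\mid \mu x.\sigma\mid x$ ($I$ finite nonempty, labels distinct). $\mathcal{SC}$ = closed guarded terms. Actions $\mathsf{Act}=\{?l,!l\}\cup\{?\mathtt t,!\mathtt t\}\cup\{?(\sigma),!(\sigma):\sigma\in\mathcal{SC}\}$. LTS: $\mathbf 1\xrightarrow\checkmark$; $\lambda.\sigma\xrightarrow\lambda\sigma$ for prefixes (including $!l.\sigma$); $\bigoplus_{i\in I}!l_i.\sigma_i\xrightarrow\tau!l_i.\sigma_i$ for $|I|>1$; $\sum ?l_i.\sigma_i\xrightarrow{?l_i}\sigma_i$; $\mu x.\sigma\xrightarrow\tau\sigma[\mu x.\sigma/x]$. Strong bisimilarity $\sim$: largest $R$ such that $\sigma_1R\sigma_2$ implies $\sigma_1\xrightarrow\checkmark$ iff $\sigma_2\xrightarrow\checkmark$, and for each $\mu\in\mathsf{Act}\cup\{\tau\}$ every $\sigma_1\xrightarrow\mu\sigma_1'$ is matched by some $\sigma_2\xrightarrow\mu\sigma_2'$ with $\sigma_1'R\sigma_2'$ and vice versa. A substitution $s$ is a finite partial map from variables to $\mathcal{SC}$, applied to free occurrences. $\mathrm{mclo}(\sigma,s)$: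 $\mathbf 1\mapsto\mathbf 1$; $x\mapsto x$; $!(\sigma^m).\sigma'\mapsto!(\sigma^m s).\mathrm{mclo}(\sigma',s)$; $?(\sigma^m).\sigma'\mapsto?(\sigma^m s).\mathrm{mclo}(\sigma',s)$; base-type prefixes and sums are mapped componentwise (keeping prefixes); $\mu x.\sigma'\mapsto\mu x.\mathrm{mclo}(\sigma',s')$ where $s'$ maps $x$ to $(\mu x.\sigma')s$ and agrees with $s$ elsewhere. $\mathrm{mcl}(\sigma)=\mathrm{mclo}(\sigma,\varepsilon)$ with $\varepsilon$ the empty substitution. *)

From Stdlib Require Import List Arith PeanoNat.
Import ListNotations.

Set Implicit Arguments.

Section Contracts.
Variables (BT L : Type).

(* Variables are named by natural numbers.
   - Ext bs  = \sum_{i in I} ?l_i.sigma_i   (external choice / branching)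
   - Int bs  = \bigoplus_{i in I} !l_i.sigma_i (internal choice);
     the output prefix !l.sigma is Int [(l, sigma)]. *)
Inductive term : Type :=
| One   : term
| InT   : BT -> term -> term
| OutT  : BT -> term -> term
| OutM  : term -> term -> term
| InM   : term -> term -> term
| Ext   : list (L * term) -> term
| Int   : list (L * term) -> term
| Mu    : nat -> term -> term
| Var   : nat -> term.

Fixpoint wf (s : term) : Prop :=
  match s with
  | One | Var _ => True
  | InT _ s' | OutT _ s' | Mu _ s' => wf s'
  | OutM m s' | InM m s' => wf m /\ wf s'
  | Ext bs | Int bs =>
      bs <> [] /\ NoDup (map fst bs) /\
      (fix all_wf (l : list (L * term)) : Prop :=
         match l with [] => True | (_, t) :: l' => wf t /\ all_wf l' end) bs
  end.

Fixpoint free_in (x : nat) (s : term) : Prop :=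
  match s with
  | One => False
  | Var y => x = y
  | InT _ s' | OutT _ s' => free_in x s'
  | OutM m s' | InM m s' => free_in x m \/ free_in x s'
  | Ext bs | Int bs =>
      (fix ex_free (l : list (L * term)) : Prop :=
         match l with [] => False | (_, t) :: l' => free_in x t \/ ex_free l' end) bs
  | Mu y s' => x <> y /\ free_in x s'
  end.

Definition closed (s : term) : Prop := forall x, ~ free_in x s.

(* every free occurrence of x in s lies under a prefix (or a choice) *)
Fixpoint guarded_in (x : nat) (s : term) : Prop :=
  match s with
  | Var y => x <> y
  | Mu y s' => x = y \/ guarded_in x s'
  | _ => True
  end.

Fixpoint guarded (s : term) : Prop :=
  match s with
  | One | Var _ => True
  | InT _ s' | OutT _ s' => guarded s'
  | OutM m s' | InM m s' => guarded m /\ guarded s'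
  | Ext bs | Int bs =>
      (fix all_g (l : list (L * term)) : Prop :=
         match l with [] => True | (_, t) :: l' => guarded t /\ all_g l' end) bs
  | Mu x s' => guarded_in x s' /\ guarded s'
  end.

Definition SC (s : term) : Prop := wf s /\ closed s /\ guarded s.

(* Substitutions: finite partial maps from variables to terms,
   represented as association lists (first binding wins). *)
Definition subst_t := list (nat * term).

Fixpoint lookup (x : nat) (s : subst_t) : option term :=
  match s with
  | [] => None
  | (y, t) :: s' => if Nat.eqb x y then Some t else lookup x s'
  end.

Definition remove_var (x : nat) (s : subst_t) : subst_t :=
  filter (fun p => negb (Nat.eqb (fst p) x)) s.

Fixpoint subst (s : subst_t) (t : term) : term :=
  match t with
  | One => One
  | Var x => match lookup x s with Some u => u | None => Var x end
  | InT b t' => InT b (subst s t')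
  | OutT b t' => OutT b (subst s t')
  | OutM m t' => OutM (subst s m) (subst s t')
  | InM m t' => InM (subst s m) (subst s t')
  | Ext bs => Ext (map (fun p => (fst p, subst s (snd p))) bs)
  | Int bs => Int (map (fun p => (fst p, subst s (snd p))) bs)
  | Mu x t' => Mu x (subst (remove_var x s) t')
  end.

Fixpoint mclo (t : term) (s : subst_t) : term :=
  match t with
  | One => One
  | Var x => Var x
  | OutM m t' => OutM (subst s m) (mclo t' s)
  | InM m t' => InM (subst s m) (mclo t' s)
  | InT b t' => InT b (mclo t' s)
  | OutT b t' => OutT b (mclo t' s)
  | Ext bs => Ext (map (fun p => (fst p, mclo (snd p) s)) bs)
  | Int bs => Int (map (fun p => (fst p, mclo (snd p) s)) bs)
  | Mu x t' => Mu x (mclo t' ((x, subst s (Mu x t')) :: remove_var x s))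
  end.

Definition mcl (t : term) : term := mclo t [].

Inductive action : Type :=
| ALin  : L -> action
| ALout : L -> action
| ATin  : BT -> action
| ATout : BT -> action
| AMin  : term -> action
| AMout : term -> action.

Inductive label : Type :=
| Tau : label
| Act : action -> label.

Definition ticks (t : term) : Prop := t = One.

Inductive step : term -> label -> term -> Prop :=
| st_InT  : forall b t, step (InT b t) (Act (ATin b)) t
| st_OutT : forall b t, step (OutT b t) (Act (ATout b)) t
| st_OutM : forall m t, SC m -> step (OutM m t) (Act (AMout m)) t
| st_InM  : forall m t, SC m -> step (InM m t) (Act (AMin m)) t
| st_OutL : forall l t, step (Int [(l, t)]) (Act (ALout l)) t
| st_IntTau : forall bs l t, 1 < length bs -> In (l, t) bs ->
    step (Int bs) Tau (Int [(l, t)])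
| st_Ext  : forall bs l t, In (l, t) bs -> step (Ext bs) (Act (ALin l)) t
| st_Mu   : forall x t, step (Mu x t) Tau (subst [(x, Mu x t)] t).

Definition is_bisimulation (R : term -> term -> Prop) : Prop :=
  forall p q, R p q ->
    (ticks p <-> ticks q) /\
    (forall mu p', step p mu p' -> exists q', step q mu q' /\ R p' q') /\
    (forall mu q', step q mu q' -> exists p', step p mu p' /\ R p' q').

Definition bisimilar (p q : term) : Prop :=
  exists R, is_bisimulation R /\ R p q.

End Contracts.

Arguments One {BT L}.

(* The relation pairing each closed term [p] with [mcl p] is a strong
   bisimulation.  Input/output prefixes and choices are preserved verbatim
   by [mcl], so their transitions match one for one.  The only real work is
   the [tau]-unfolding of recursion: [mcl] of the unfolding of [Mu x t] is
   the unfolding of [mcl (Mu x t)], an instance of a substitution lemma for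
   [mclo] ([mclo_subst]).  Closedness is all that is used. *)

From Stdlib Require Import List PeanoNat.
Import ListNotations.

Section Contracts.
Variables BT L : Type.
Notation tm := (term BT L).

Section TermInd.
Variable P : tm -> Prop.
Hypotheses
  (HOne : P One)
  (HInT : forall b t, P t -> P (InT b t))
  (HOutT : forall b t, P t -> P (OutT b t))
  (HOutM : forall m t, P m -> P t -> P (OutM m t))
  (HInM : forall m t, P m -> P t -> P (InM m t))
  (HExt : forall bs, (forall l t, In (l, t) bs -> P t) -> P (Ext bs))
  (HInt : forall bs, (forall l t, In (l, t) bs -> P t) -> P (Int bs))
  (HMu : forall x t, P t -> P (Mu x t))
  (HVar : forall x, P (Var BT L x)).

Fixpoint term_nested_ind (t : tm) : P t :=
  let fix branches (bs : list (L * tm)) : forall l u, In (l, u) bs -> P u :=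
    match bs with
    | [] => fun l u H => False_ind _ H
    | (l0, t0) :: bs' => fun l u H =>
        match H with
        | or_introl e => eq_ind t0 P (term_nested_ind t0) u (f_equal snd e)
        | or_intror H' => branches bs' l u H'
        end
    end in
  match t with
  | One => HOne
  | InT b t => HInT b t (term_nested_ind t)
  | OutT b t => HOutT b t (term_nested_ind t)
  | OutM m t => HOutM m t (term_nested_ind m) (term_nested_ind t)
  | InM m t => HInM m t (term_nested_ind m) (term_nested_ind t)
  | Ext bs => HExt bs (branches bs)
  | Int bs => HInt bs (branches bs)
  | Mu x t => HMu x t (term_nested_ind t)
  | Var _ _ x => HVar x
  end.
End TermInd.

Notation sb := (subst_t BT L).

Lemma free_in_Ext x (bs : list (L * tm)) :
  free_in x (Ext bs) <-> exists l t, In (l, t) bs /\ free_in x t.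
Proof.
  induction bs as [|[l t] bs IH]; cbn in *.
  - split; [tauto | intros (? & ? & [] & _)].
  - rewrite IH; split.
    + intros [Hx | (l' & t' & Hin & Hx)]; eauto 6.
    + intros (l' & t' & [[= -> ->] | Hin] & Hx); eauto 6.
Qed.

Lemma free_in_Int x (bs : list (L * tm)) :
  free_in x (Int bs) <-> exists l t, In (l, t) bs /\ free_in x t.
Proof. exact (free_in_Ext x bs). Qed.

Lemma closed_Ext_branch bs l (t : tm) : closed (Ext bs) -> In (l, t) bs -> closed t.
Proof. intros Hc Hin x Hx; apply (Hc x), free_in_Ext; eauto. Qed.

Lemma lookup_remove_var x y (s : sb) :
  lookup x (remove_var y s) = if Nat.eqb x y then None else lookup x s.
Proof.
  induction s as [|[z u] s IH]; cbn.
  - now destruct (Nat.eqb x y).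
  - unfold remove_var in *; cbn.
    destruct (Nat.eqb_spec z y) as [-> | Hzy]; cbn; rewrite ?IH.
    + now destruct (Nat.eqb_spec x y).
    + destruct (Nat.eqb_spec x z), (Nat.eqb_spec x y); congruence.
Qed.

Lemma lookup_app x (a b : sb) :
  lookup x (a ++ b) = match lookup x a with Some u => Some u | None => lookup x b end.
Proof.
  induction a as [|[z u] a IH]; cbn; auto.
  now destruct (Nat.eqb x z).
Qed.

Lemma remove_var_app x (r s : sb) : remove_var x (r ++ s) = remove_var x r ++ remove_var x s.
Proof. apply filter_app. Qed.

Definition closed_range (s : sb) : Prop := forall x u, lookup x s = Some u -> closed u.

Lemma closed_range_remove_var y s : closed_range s -> closed_range (remove_var y s).
Proof.
  intros Hs x u; rewrite lookup_remove_var.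
  destruct (Nat.eqb x y); [discriminate | apply Hs].
Qed.

Lemma closed_range_app (r s : sb) : closed_range r -> closed_range s -> closed_range (r ++ s).
Proof.
  intros Hr Hs x u; rewrite lookup_app.
  destruct (lookup x r) eqn:E; [intros [= <-] |]; eauto.
Qed.

Lemma closed_range_single x (u : tm) : closed u -> closed_range [(x, u)].
Proof. intros Hu z v; cbn; destruct (Nat.eqb z x); intros [= <-]; exact Hu. Qed.

Lemma subst_ext (t : tm) : forall a b,
  (forall x, free_in x t -> lookup x a = lookup x b) -> subst a t = subst b t.
Proof.
  induction t using term_nested_ind; intros a c Hab; cbn in *; f_equal; eauto.
  - apply map_ext_in; intros [l u] Hin; cbn; f_equal.
    eapply H; [eassumption |]; intros x Hx; apply Hab, free_in_Ext; eauto.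
  - apply map_ext_in; intros [l u] Hin; cbn; f_equal.
    eapply H; [eassumption |]; intros x Hx; apply Hab, free_in_Int; eauto.
  - apply IHt; intros z Hz; rewrite !lookup_remove_var.
    destruct (Nat.eqb_spec z x); auto.
  - now rewrite Hab.
Qed.

Lemma subst_nil (t : tm) : subst [] t = t.
Proof.
  induction t using term_nested_ind; cbn; f_equal; auto;
    rewrite <- (map_id bs) at 2; apply map_ext_in; intros [l u] Hin; cbn; f_equal; eauto.
Qed.

Lemma subst_closed (u : tm) s : closed u -> subst s u = u.
Proof.
  intros Hu; rewrite <- (subst_nil u) at 2.
  apply subst_ext; intros x Hx; destruct (Hu x Hx).
Qed.

Lemma subst_subst (t : tm) : forall S T, closed_range T ->
  subst S (subst T t) = subst (T ++ S) t.
Proof.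
  induction t using term_nested_ind; intros S T HT; cbn; f_equal; auto.
  - rewrite map_map; apply map_ext_in; intros [l u] Hin; cbn; f_equal; eauto.
  - rewrite map_map; apply map_ext_in; intros [l u] Hin; cbn; f_equal; eauto.
  - rewrite IHt by now apply closed_range_remove_var.
    apply subst_ext; intros z _.
    rewrite !lookup_app, !lookup_remove_var, lookup_app.
    now destruct (Nat.eqb z x).
  - rewrite lookup_app; destruct (lookup x T) eqn:E; cbn; auto.
    apply subst_closed; eauto.
Qed.

Lemma free_in_subst (t : tm) : forall s z, closed_range s ->
  free_in z (subst s t) -> free_in z t /\ lookup z s = None.
Proof.
  induction t using term_nested_ind; intros s z Hs Hz; cbn in *; try tauto.
  - apply IHt; auto.
  - apply IHt; auto.
  - destruct Hz as [Hz | Hz]; [destruct (IHt1 s z Hs Hz) | destruct (IHt2 s z Hs Hz)]; auto.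
  - destruct Hz as [Hz | Hz]; [destruct (IHt1 s z Hs Hz) | destruct (IHt2 s z Hs Hz)]; auto.
  - apply free_in_Ext in Hz as (l & u & Hin & Hz).
    apply in_map_iff in Hin as ([l0 u0] & [= <- <-] & Hin).
    destruct (H _ _ Hin s z Hs Hz); split; auto; apply free_in_Ext; eauto.
  - apply free_in_Int in Hz as (l & u & Hin & Hz).
    apply in_map_iff in Hin as ([l0 u0] & [= <- <-] & Hin).
    destruct (H _ _ Hin s z Hs Hz); split; auto; apply free_in_Int; eauto.
  - destruct Hz as [Hzx Hz].
    destruct (IHt _ _ (closed_range_remove_var x s Hs) Hz) as [Ht Hlk].
    rewrite lookup_remove_var in Hlk.
    destruct (Nat.eqb_spec z x); [congruence | auto].
  - destruct (lookup x s) eqn:E.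
    + destruct (Hs _ _ E z Hz).
    + cbn in Hz; subst; auto.
Qed.

Lemma closed_unfold x (t : tm) : closed (Mu x t) -> closed (subst [(x, Mu x t)] t).
Proof.
  intros Hc z Hz.
  apply free_in_subst in Hz as [Hz Hlk]; [| now apply closed_range_single].
  cbn in Hlk; destruct (Nat.eqb_spec z x); [discriminate |].
  apply (Hc z); cbn; auto.
Qed.

Lemma closed_step (p p' : tm) mu : closed p -> step p mu p' -> closed p'.
Proof.
  intros Hc Hst; destruct Hst; try (intros z Hz; apply (Hc z); cbn; tauto).
  - intros z Hz; apply (Hc z), free_in_Int.
    apply free_in_Int in Hz as (l' & u & [[= <- <-] | []] & Hz); eauto.
  - eapply closed_Ext_branch; eassumption.
  - now apply closed_unfold.
Qed.

Definition disjoint_dom (r s : sb) : Prop := forall x, lookup x r = None \/ lookup x s = None.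

Definition covers (s : sb) (t : tm) : Prop := forall x, free_in x t -> lookup x s <> None.

Lemma lookup_app_comm x (r s : sb) : disjoint_dom r s -> lookup x (r ++ s) = lookup x (s ++ r).
Proof.
  intros Hd; rewrite !lookup_app.
  destruct (Hd x) as [-> | ->]; now destruct (lookup x _).
Qed.

Lemma subst_subst_disjoint (t : tm) r s : closed_range s -> disjoint_dom r s ->
  subst r (subst s t) = subst (r ++ s) t.
Proof.
  intros Hs Hd; rewrite subst_subst by exact Hs.
  apply subst_ext; intros x _; symmetry; now apply lookup_app_comm.
Qed.

Lemma closed_subst_covered (t : tm) s : closed_range s -> covers s t -> closed (subst s t).
Proof. intros Hs Hcov z Hz; apply free_in_subst in Hz as [Hz Hlk]; auto; exact (Hcov z Hz Hlk). Qed.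

Lemma mclo_ext (t : tm) : forall a b,
  (forall x, free_in x t -> lookup x a = lookup x b) -> mclo t a = mclo t b.
Proof.
  induction t using term_nested_ind; intros a c Hab; cbn in *; f_equal; eauto using subst_ext.
  - apply map_ext_in; intros [l u] Hin; cbn; f_equal.
    eapply H; [eassumption |]; intros x Hx; apply Hab, free_in_Ext; eauto.
  - apply map_ext_in; intros [l u] Hin; cbn; f_equal.
    eapply H; [eassumption |]; intros x Hx; apply Hab, free_in_Int; eauto.
  - apply IHt; intros z Hz; cbn; rewrite !lookup_remove_var.
    destruct (Nat.eqb_spec z x) as [-> |]; auto.
    do 2 f_equal; apply subst_ext; intros w Hw; rewrite !lookup_remove_var.
    destruct (Nat.eqb_spec w x); auto.
Qed.

Lemma mclo_closed (u : tm) s : closed u -> mclo u s = mcl u.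
Proof. intros Hu; apply mclo_ext; intros x Hx; destruct (Hu x Hx). Qed.

Definition mcl_range (s : sb) : sb := map (fun p => (fst p, mcl (snd p))) s.

Lemma lookup_mcl_range x s : lookup x (mcl_range s) = option_map (@mcl BT L) (lookup x s).
Proof.
  induction s as [|[z u] s IH]; cbn; auto.
  now destruct (Nat.eqb x z).
Qed.

Lemma mcl_range_remove_var x s : mcl_range (remove_var x s) = remove_var x (mcl_range s).
Proof.
  unfold mcl_range, remove_var; induction s as [|[z u] s IH]; cbn; auto.
  destruct (Nat.eqb z x); cbn; now rewrite IH.
Qed.

(* [r] plays the role of the recursion unfoldings accumulated by [mclo];
   the terms substituted by [s] end up closed by [mcl]. *)
Lemma mclo_subst (t : tm) : forall r s,
  closed_range r -> closed_range s -> disjoint_dom r s -> covers (r ++ s) t ->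
  mclo (subst s t) r = subst (mcl_range s) (mclo t (r ++ s)).
Proof.
  assert (Hmessage : forall (m : tm) r s, closed_range r -> closed_range s ->
            disjoint_dom r s -> covers (r ++ s) m ->
            subst r (subst s m) = subst (mcl_range s) (subst (r ++ s) m)).
  { intros m r s Hr Hs Hd Hcov.
    rewrite subst_subst_disjoint by assumption.
    symmetry; apply subst_closed, closed_subst_covered; auto using closed_range_app. }
  induction t using term_nested_ind; intros r s Hr Hs Hd Hcov; cbn [subst mclo].
  - reflexivity.
  - f_equal; apply IHt; auto.
  - f_equal; apply IHt; auto.
  - f_equal; [apply Hmessage | apply IHt2]; auto; intros z Hz; apply Hcov; cbn; auto.
  - f_equal; [apply Hmessage | apply IHt2]; auto; intros z Hz; apply Hcov; cbn; auto.
  - cbn; f_equal; rewrite !map_map; apply map_ext_in; intros [l u] Hin; cbn; f_equal.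
    eapply H; eauto; intros z Hz; apply Hcov, free_in_Ext; eauto.
  - cbn; f_equal; rewrite !map_map; apply map_ext_in; intros [l u] Hin; cbn; f_equal.
    eapply H; eauto; intros z Hz; apply Hcov, free_in_Int; eauto.
  - set (u := Mu x (subst (remove_var x r) (subst (remove_var x s) t))).
    assert (Hu : u = subst (r ++ s) (Mu x t))
      by exact (subst_subst_disjoint (Mu x t) r s Hs Hd).
    assert (Hu_closed : closed u).
    { rewrite Hu; apply closed_subst_covered; auto using closed_range_app. }
    rewrite IHt.
    { rewrite mcl_range_remove_var, Hu; cbn [subst]; now rewrite remove_var_app. }
    + intros z v; cbn; destruct (Nat.eqb z x); [intros [= <-]; exact Hu_closed |].
      now apply closed_range_remove_var.
    + now apply closed_range_remove_var.
    + intros z; cbn; rewrite !lookup_remove_var; destruct (Nat.eqb z x); auto.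
    + intros z Hz; cbn; rewrite lookup_app, !lookup_remove_var.
      destruct (Nat.eqb_spec z x); [discriminate |].
      rewrite <- lookup_app; apply Hcov; cbn; auto.
  - cbn; rewrite lookup_mcl_range; destruct (lookup x s) eqn:E; cbn; auto.
    apply mclo_closed; eauto.
Qed.

Lemma mcl_OutM (m t : tm) : mcl (OutM m t) = OutM m (mcl t).
Proof. unfold mcl; cbn; now rewrite subst_nil. Qed.

Lemma mcl_InM (m t : tm) : mcl (InM m t) = InM m (mcl t).
Proof. unfold mcl; cbn; now rewrite subst_nil. Qed.

Lemma mcl_Mu x (t : tm) : mcl (Mu x t) = Mu x (mclo t [(x, Mu x t)]).
Proof. unfold mcl; cbn; now rewrite subst_nil. Qed.

Lemma mcl_unfold x (t : tm) : closed (Mu x t) ->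
  mcl (subst [(x, Mu x t)] t) = subst [(x, mcl (Mu x t))] (mclo t [(x, Mu x t)]).
Proof.
  intros Hc; apply (mclo_subst t [] [(x, Mu x t)]).
  - intros z u; discriminate.
  - now apply closed_range_single.
  - intros z; now left.
  - intros z Hz; cbn; destruct (Nat.eqb_spec z x); [discriminate |].
    destruct (Hc z); cbn; auto.
Qed.

Lemma mcl_ticks (p : tm) : ticks (mcl p) <-> ticks p.
Proof. unfold ticks; destruct p; cbn; split; congruence. Qed.

Lemma step_mcl (p p' : tm) mu : closed p -> step p mu p' -> step (mcl p) mu (mcl p').
Proof.
  intros Hc Hst; destruct Hst.
  - constructor.
  - constructor.
  - rewrite mcl_OutM; now constructor.
  - rewrite mcl_InM; now constructor.
  - constructor.
  - apply st_IntTau; [now rewrite length_map |].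
    now apply (in_map (fun p => (fst p, mcl (snd p))) _ (l, t)).
  - apply st_Ext; now apply (in_map (fun p => (fst p, mcl (snd p))) _ (l, t)).
  - rewrite mcl_unfold, mcl_Mu by exact Hc; constructor.
Qed.

Lemma mcl_step_inv {p q : tm} {mu} : closed p -> step (mcl p) mu q ->
  exists p', step p mu p' /\ q = mcl p'.
Proof.
  intros Hc Hst; destruct p as [| b t | b t | m t | m t | bs | bs | x t | x].
  - inversion Hst.
  - inversion Hst; subst; eexists; split; [constructor | reflexivity].
  - inversion Hst; subst; eexists; split; [constructor | reflexivity].
  - rewrite mcl_OutM in Hst; inversion Hst; subst.
    eexists; split; [now constructor | reflexivity].
  - rewrite mcl_InM in Hst; inversion Hst; subst.
    eexists; split; [now constructor | reflexivity].
  - inversion Hst as [| | | | | | bs' l u Hin |]; subst.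
    apply in_map_iff in Hin as ([l0 t0] & [= <- <-] & Hin).
    eexists; split; [apply st_Ext, Hin | reflexivity].
  - inversion Hst as [| | | | l u Hbs | bs' l u Hlen Hin | |]; subst.
    + destruct bs as [| [l0 t0] [| ]]; inversion Hbs; subst.
      eexists; split; [constructor | reflexivity].
    + rewrite length_map in Hlen.
      apply in_map_iff in Hin as ([l0 t0] & [= <- <-] & Hin).
      eexists; split; [apply st_IntTau; eassumption | reflexivity].
  - rewrite mcl_Mu in Hst; inversion Hst; subst.
    eexists; split; [constructor |].
    now rewrite mcl_unfold, mcl_Mu.
  - inversion Hst.
Qed.

Lemma mcl_is_bisimulation : is_bisimulation (fun p q : tm => closed p /\ q = mcl p).
Proof.
  intros p q [Hc ->]; split; [| split].
  - symmetry; apply mcl_ticks.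
  - intros mu p' Hst; exists (mcl p'); split; [now apply step_mcl |].
    split; [eapply closed_step |]; eauto.
  - intros mu q' Hst; destruct (mcl_step_inv Hc Hst) as (p' & Hst' & ->).
    exists p'; split; [exact Hst' |]; split; [eapply closed_step |]; eauto.
Qed.

End Contracts.

Theorem mainTheorem20 (BT L : Type) (sigma : term BT L) :
  SC sigma -> bisimilar sigma (mcl sigma).
Proof.
  intros (_ & Hclosed & _).
  exists (fun p q => closed p /\ q = mcl p); split.
  - apply mcl_is_bisimulation.
  - now split.
Qed.
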